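(* Let $X(t)$, $t\in T$, be a separable centered Gaussian random function with $\rho(s,t)=(\mathbb{E}(X(t)-X(s))^2)^{1/2}$, $(T,\rho)$ relatively compact, and covering numbers $N(\varepsilon)$. Let $\Psi$ be a function with $N(\varepsilon)\le\Psi(\varepsilon)$ for all $\varepsilon>0$, and assume there are $\varepsilon_0>0$ and $C_2>1$ with $\Psi(\varepsilon/2)\le C_2\Psi(\varepsilon)$ for all $0<\varepsilon\le\varepsilon_0$. Then for every $\varepsilon\in(0,\varepsilon_0)$ and every $r\in(\tfrac12,1)$, $$\prod_{k=0}^\infty\mathbb{P}(2^{-k}\varepsilon|\xi|\le r^k\varepsilon)^{N(2^{-k-1}\varepsilon)}\ge\exp\{-C_3(r)\Psi(\varepsilon)\},$$ where $\xi$ is standard normal and $C_3(r)$ depends only on $C_2$ and $r$.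
   Context: $N(\varepsilon)$ is the minimal number of points $t_1,\dots,t_n\in T$ such that every $t\in T$ has $\rho(t,t_i)\le\varepsilon$ for some $i$. *)

From HB Require Import structures.
From mathcomp Require Import all_boot all_order all_algebra.
From mathcomp Require Import all_classical all_reals all_analysis.
Set Implicit Arguments. Unset Strict Implicit. Unset Printing Implicit Defensive.
Import Order.TTheory GRing.Theory Num.Theory.
Import numFieldNormedType.Exports.
Local Open Scope classical_set_scope.
Local Open Scope ring_scope.

Section defs.
Context {R : realType} {d : measure_display} {Omega : measurableType d}
  (P : probability Omega R) {T : Type}.

Definition centered_gaussian_rv (Y : Omega -> R) : Prop :=
  measurable_fun setT Y /\
  ((exists s : R, 0 < s /\
      forall A : set R, measurable A -> P (Y @^-1` A) = normal_prob 0 s A)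
   \/ P [set w | Y w <> 0] = 0%E).

Definition centered_gaussian_process (X : T -> Omega -> R) : Prop :=
  forall (n : nat) (ts : 'I_n -> T) (a : 'I_n -> R),
    centered_gaussian_rv (fun w => \sum_(i < n) a i * X (ts i) w).

Definition gauss_rho (X : T -> Omega -> R) (s t : T) : R :=
  Num.sqrt (fine (\int[P]_w ((X t w - X s w) ^+ 2)%:E)%E).

(* separability (Doob), with respect to the rho-topology on T: there is a
   countable D and a null set outside of which every X(t) is a limit of
   X(u_n) along some sequence u_n in D with u_n -> t. *)
Definition separable_process (X : T -> Omega -> R) : Prop :=
  exists (D : set T) (N : set Omega),
    countable D /\ measurable N /\ P N = 0%E /\
    forall w, ~ N w -> forall t : T, exists u : nat -> T,
      (forall n, D (u n)) /\
      (fun n => gauss_rho X (u n) t) @ \oo --> (0 : R) /\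
      (fun n => X (u n) w) @ \oo --> X t w.
End defs.

Section cover.
Context {R : realType} {T : Type}.

Definition is_eps_net (rho : T -> T -> R) (e : R) (n : nat) : Prop :=
  exists t : 'I_n -> T, forall s : T, exists i : 'I_n, rho s (t i) <= e.

(* (T, rho) relatively compact = totally bounded *)
Definition totally_bounded_pm (rho : T -> T -> R) : Prop :=
  forall e : R, 0 < e -> exists n : nat, is_eps_net rho e n.

(* N(e): minimal number of points of an e-net (0 if no finite net exists) *)
Definition covering_number (rho : T -> T -> R) (e : R) : nat :=
  match pselect (exists n : nat, `[< is_eps_net rho e n >]) with
  | left h => ex_minn h
  | right _ => 0%N
  end.
End cover.

From HB Require Import structures.
From mathcomp Require Import all_boot all_order all_algebra.
From mathcomp Require Import all_classical all_reals all_analysis.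
From mathcomp Require Import measurable_realfun ring lra.
Import Order.TTheory GRing.Theory Num.Theory.
Import numFieldNormedType.Exports.
Local Open Scope classical_set_scope.
Local Open Scope ring_scope.

(* Write p_k = P(|xi| <= a^k) with a = 2r > 1, which is the k-th factor of the
   product.  Since p^N >= exp(-N (1 - p) / c) whenever 0 < c <= p <= 1, the
   product is at least exp(-sum_k N_k (1 - p_k) / p_0).  Iterating the doubling
   condition gives N_k <= Psi(eps / 2^(k+1)) <= C2^(k+1) Psi(eps), while the
   Gaussian tail 1 - p_k <= c exp(-a^(2k) / 4) beats every geometric sequence:
   bounding exp(-y) by (m+1)! / y^(m+1) with a^(2(m+1)) >= 2 C2 dominates
   C2^(k+1) (1 - p_k) by a geometric series of ratio 1/2. *)

Section real_estimates.
Context {R : realType}.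

Lemma expr_ge1Dn (b : R) (n : nat) : 1 <= b -> 1 + n%:R * (b - 1) <= b ^+ n.
Proof.
move=> b1; elim: n => [|n IH]; first by rewrite mul0r addr0 expr0.
rewrite exprS -nat1r.
have : 0 <= n%:R * (b - 1) * (b - 1) by rewrite !mulr_ge0 // subr_ge0.
have : b * (1 + n%:R * (b - 1)) <= b * b ^+ n by rewrite ler_pM2l //; lra.
lra.
Qed.

Lemma exists_expr_ge (b C : R) : 1 < b -> exists m : nat, C <= b ^+ m.+1.
Proof.
move=> b1; have b10 : 0 < b - 1 by rewrite subr_gt0.
have := archi_boundP (divr_ge0 (normr_ge0 C) (ltW b10)).
set m := Num.Def.archi_bound _; rewrite ltr_pdivrMr // => Cm.
exists m; apply: le_trans (ler_norm C) _.
have := @expr_ge1Dn b m (ltW b1); rewrite exprS.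
have : 1 <= b ^+ m by rewrite exprn_ege1 // ltW.
nra.
Qed.

Lemma expRN_le_fact (y : R) (m : nat) : 0 < y ->
  expR (- y) <= (m.+1)`!%:R / y ^+ m.+1.
Proof.
move=> y0; have fact0 : 0 < (m.+1)`!%:R :> R by rewrite ltr0n fact_gt0.
rewrite expRN -invf_div lef_pV2 ?posrE ?expR_gt0 ?divr_gt0 ?exprn_gt0 //.
by have := expR_ge1Dxn m (ltW y0); lra.
Qed.

Lemma exprn_ge_expR (c p M : R) (N : nat) : 0 < c -> c <= p -> p <= 1 ->
  N%:R <= M -> expR (- (M * (1 - p)) / c) <= p ^+ N.
Proof.
move=> c0 cp p1 NM; have p0 : 0 < p by apply: lt_le_trans cp.
have q0 : 0 <= 1 - p by rewrite subr_ge0.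
have expR_le : expR (- ((1 - p) / p)) <= p.
  rewrite expRN -[leRHS]invrK lef_pV2 ?posrE ?invr_gt0 ?expR_gt0 //.
  rewrite [leLHS](_ : _ = 1 + (1 - p) / p) ?expR_ge1Dx //.
  by field; rewrite gt_eqF.
apply: (le_trans _ (lerXn2r N _ _ expR_le)); rewrite ?nnegrE ?expR_ge0 ?(ltW p0) //.
rewrite -expRM_natr ler_expR mulNr mulNr lerN2.
have M0 : 0 <= M by apply: le_trans NM.
apply: (@le_trans _ _ (M * ((1 - p) / p))).
  by rewrite [leLHS]mulrC; apply: ler_wpM2r => //; rewrite divr_ge0 // ltW.
by rewrite mulrA ler_wpM2l ?mulr_ge0 ?lef_pV2 ?posrE.
Qed.

Lemma prod_exprn_ge_expR (n : nat) {c : R} {p M : nat -> R} {N : nat -> nat} :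
  0 < c -> (forall k, c <= p k <= 1) -> (forall k, (N k)%:R <= M k) ->
  expR (- (\sum_(k < n) M k * (1 - p k)) / c) <= \prod_(k < n) p k ^+ N k.
Proof.
move=> c0 p_bd NM; elim: n => [|n IH]; first by rewrite !big_ord0 oppr0 mul0r expR0.
rewrite !big_ord_recr /= opprD mulrDl expRD.
have /andP[cp p1] := p_bd n.
by apply: ler_pM; rewrite ?expR_ge0 //; apply: exprn_ge_expR.
Qed.

Lemma nonincreasing_prod_exprn (p : nat -> R) (N : nat -> nat) :
  (forall k, 0 <= p k <= 1) ->
  {homo (fun n => \prod_(k < n) p k ^+ N k) : n m / (n <= m)%N >-> m <= n}.
Proof.
move=> p01; apply/nonincreasing_seqP => n; rewrite big_ord_recr /=.
have /andP[p0 p1] := p01 n.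
rewrite ler_piMr ?exprn_ile1 //; apply: prodr_ge0 => k _.
by apply: exprn_ge0; case/andP: (p01 k).
Qed.

Lemma doubling_iter (f : R -> R) {C e0 e : R} : 0 <= C -> 0 < e -> e <= e0 ->
  (forall x, 0 < x -> x <= e0 -> f (x / 2) <= C * f x) ->
  forall j : nat, f (e / 2 ^+ j) <= C ^+ j * f e.
Proof.
move=> C0 e_gt0 ee0 f_doubling; elim=> [|j IH]; first by rewrite expr0 divr1 mul1r.
have ej0 : 0 < e / 2 ^+ j by rewrite divr_gt0 ?exprn_gt0.
have ej_le : e / 2 ^+ j <= e0.
  apply: le_trans ee0; rewrite ler_pdivrMr ?exprn_gt0 // ler_peMr ?(ltW e_gt0) //.
  by apply: exprn_ege1; rewrite ler1n.
have -> : e / 2 ^+ j.+1 = e / 2 ^+ j / 2 by rewrite exprSr invfM mulrA.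
apply: (le_trans (f_doubling _ ej0 ej_le)).
by rewrite exprS -mulrA ler_wpM2l.
Qed.

Lemma sum_geometric_le {C B E : R} {e : nat -> R} {n : nat} :
  0 < C -> 0 <= E -> 2 * C <= B -> (forall k, e k <= E / B ^+ k) ->
  \sum_(k < n) C ^+ k.+1 * e k <= 2 * C * E.
Proof.
move=> C0 E0 CB e_le; have B0 : 0 < B by apply: lt_le_trans CB; rewrite mulr_gt0.
apply: (@le_trans _ _ (\sum_(k < n) C * E * 2^-1 ^+ k)).
  apply: ler_sum => k _.
  apply: le_trans (ler_wpM2l (exprn_ge0 _ (ltW C0)) (e_le k)) _.
  rewrite (_ : _ * (E / _) = C * E * (C / B) ^+ k); last first.
    by rewrite expr_div_n exprS; field; rewrite expf_neq0 // gt_eqF.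
  apply: ler_wpM2l; first by rewrite mulr_ge0 // ltW.
  apply: lerXn2r; rewrite ?nnegrE ?divr_ge0 ?invr_ge0 ?(ltW C0) ?(ltW B0) //.
  by rewrite ler_pdivrMr //; lra.
have geom : \sum_(k < n) 2^-1 ^+ k <= 2 :> R.
  have := @geometric_le_lim R n 1 2^-1 ler01.
  rewrite invr_gt0 ltr0n ger0_norm ?invr_ge0 // invf_lt1 ?ltr1n // => /(_ isT isT).
  rewrite seriesEord /= (_ : 1 / (1 - 2^-1) = 2 :> R); last by field.
  by under eq_bigr do rewrite mul1r.
rewrite -mulr_sumr.
have : 0 <= C * E by rewrite mulr_ge0 // ltW.
nra.
Qed.

Lemma nonincreasing_limn_ge (u : R ^nat) (l : R) :
  {homo u : n m / (n <= m)%N >-> m <= n} -> (forall n, l <= u n) -> l <= limn u.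
Proof.
move=> u_noninc lu; have u_lb : has_lbound (range u) by exists l => _ [n _ <-].
apply: limr_ge; first exact: cvgP (nonincreasing_cvgn u_noninc u_lb).
exact: nearW.
Qed.

End real_estimates.

Section normal_ball.
Context {R : realType}.

Definition normal_ball (t : R) : R := fine (normal_prob 0 1 `[-t, t]%classic).

Let normal_ball_fin (t : R) : normal_prob 0 1 `[-t, t]%classic \is a fin_num.
Proof. exact: fin_num_measure. Qed.

Lemma normal_ball_ge0 (t : R) : 0 <= normal_ball t.
Proof. exact/fine_ge0/measure_ge0. Qed.

Lemma normal_ball_le1 (t : R) : normal_ball t <= 1.
Proof. by rewrite -lee_fin fineK // probability_le1. Qed.

Lemma le_normal_ball (s t : R) : s <= t -> normal_ball s <= normal_ball t.
Proof.
move=> st; apply: fine_le => //; apply: le_measure; rewrite ?inE //.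
by move=> x /=; rewrite !in_itv /= => /andP[? ?]; apply/andP; split; lra.
Qed.

Lemma normal_ball1_gt0 : 0 < normal_ball 1.
Proof.
pose I : set R := `[-1, 1]%classic.
have mI : measurable I by exact: measurable_itv.
have peak_le : ((normal_peak 1 * expR (- 2^-1))%:E * lebesgue_measure I
                 <= normal_prob 0 1 I)%E.
  rewrite -integral_cst // /normal_prob; apply: ge0_le_integral => //.
  - by move=> x _; rewrite lee_fin mulr_ge0 ?expR_ge0 ?normal_peak_ge0.
  - apply/measurable_EFinP; apply: measurable_funTS.
    exact: measurable_normal_pdf.
  - move=> x; rewrite /I /= in_itv /= => /andP[x1 x2]; rewrite lee_fin.
    rewrite /normal_pdf oner_eq0 /normal_fun subr0 expr1n.
    rewrite ler_pM2l ?normal_peak_gt0 ?oner_eq0 // ler_expR.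
    have : x ^+ 2 <= 1 by nra.
    lra.
rewrite /normal_ball -lte_fin fineK //; apply: lt_le_trans peak_le.
rewrite lebesgue_measure_itv /= lte_fin ifT; last by lra.
by rewrite -EFinD -EFinM lte_fin !mulr_gt0 ?expR_gt0 ?normal_peak_gt0 ?oner_eq0.
Qed.

Definition normal_tail_const : R := normal_peak 1 / normal_peak (Num.sqrt 2).

Definition normal_tail_pow_const (m : nat) : R :=
  normal_tail_const * (m.+1)`!%:R * 4 ^+ m.+1.

Lemma normal_tail_const_ge0 : 0 <= normal_tail_const.
Proof. by rewrite divr_ge0 ?normal_peak_ge0. Qed.

Lemma normal_tail_pow_const_ge0 (m : nat) : 0 <= normal_tail_pow_const m.
Proof.
apply: mulr_ge0; last exact: exprn_ge0.
by apply: mulr_ge0; [exact: normal_tail_const_ge0 | exact: ler0n].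
Qed.

Lemma normal_pdf_le_tail (t x : R) : 0 <= t -> t <= `|x| ->
  normal_pdf 0 1 x
    <= normal_tail_const * expR (- (t ^+ 2 / 4)) * normal_pdf 0 (Num.sqrt 2) x.
Proof.
move=> t0 tx; have s0 : Num.sqrt (2 : R) != 0 by rewrite gt_eqF // sqrtr_gt0.
rewrite /normal_pdf (negbTE s0) oner_eq0 /normal_tail_const /normal_fun.
rewrite !subr0 sqr_sqrtr // expr1n.
rewrite [leRHS](_ : _ = normal_peak 1 *
    (expR (- (t ^+ 2 / 4)) * expR (- x ^+ 2 / (2 *+ 2)))); last first.
  by field; rewrite gt_eqF ?normal_peak_gt0.
rewrite ler_pM2l ?normal_peak_gt0 ?oner_eq0 // -expRD ler_expR.
have : t ^+ 2 <= `|x| ^+ 2 by apply: lerXn2r; rewrite ?nnegrE.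
rewrite real_normK ?num_real //.
lra.
Qed.

Lemma normal_ball_tail (t : R) : 0 < t ->
  1 - normal_ball t <= normal_tail_const * expR (- (t ^+ 2 / 4)).
Proof.
move=> t0; set K := normal_tail_const * _.
have K0 : 0 <= K by rewrite mulr_ge0 ?expR_ge0 ?normal_tail_const_ge0.
pose B : set R := ~` `[-t, t]%classic.
have mB : measurable B by apply: measurableC.
have pdf_meas s : measurable_fun B (fun x => (normal_pdf 0 s x)%:E).
  by apply/measurable_EFinP/measurable_funTS; exact: measurable_normal_pdf.
have pdf_ge0 s x : B x -> (0 <= (normal_pdf 0 s x)%:E)%E.
  by rewrite lee_fin normal_pdf_ge0.
suff : (normal_prob 0 1 B <= K%:E)%E.
  by rewrite probability_setC // -lee_fin EFinB fineK.
apply: (@le_trans _ _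
  (\int[lebesgue_measure]_(x in B) (K * normal_pdf 0 (Num.sqrt 2) x)%:E)%E).
  apply: ge0_le_integral => //.
  - exact: pdf_ge0.
  - exact: pdf_meas.
  - apply/measurable_EFinP; apply: measurable_funM => //.
    by apply/measurable_EFinP; exact: pdf_meas.
  - move=> x Bx; rewrite lee_fin; apply: normal_pdf_le_tail; first exact: ltW.
    rewrite leNgt; apply/negP => /ltW; rewrite ler_norml => tx.
    by apply: Bx; rewrite /= in_itv.
under eq_integral do rewrite EFinM.
rewrite ge0_integralZl_EFin //; [|exact: pdf_ge0|exact: pdf_meas].
rewrite -[leRHS]mule1 lee_pmul ?integral_ge0 //; first exact: pdf_ge0.
exact: (probability_le1 (normal_prob 0 (Num.sqrt 2)) mB).
Qed.

Lemma normal_ball_tail_pow (t : R) (m : nat) : 0 < t ->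
  1 - normal_ball t <= normal_tail_pow_const m / (t ^+ 2) ^+ m.+1.
Proof.
move=> t0; apply: (le_trans (normal_ball_tail _ t0)); rewrite /normal_tail_pow_const.
rewrite -[leRHS]mulrA -[leRHS]mulrA; apply: ler_wpM2l; first exact: normal_tail_const_ge0.
rewrite -[in leRHS]invf_div -[in leRHS]expr_div_n; apply: expRN_le_fact.
by rewrite divr_gt0 ?exprn_gt0.
Qed.

Lemma prod_normal_ball_ge (n : nat) {a C psi : R} {N : nat -> nat} {m : nat} :
  1 < a -> 1 < C -> 2 * C <= (a ^+ 2) ^+ m.+1 -> 0 <= psi ->
  (forall k, (N k)%:R <= C ^+ k.+1 * psi) ->
  expR (- (2 * C * normal_tail_pow_const m / normal_ball 1 * psi))
    <= \prod_(k < n) normal_ball (a ^+ k) ^+ N k.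
Proof.
move=> a_gt1 C_gt1 Cm psi_ge0 N_le.
have p_bd k : normal_ball 1 <= normal_ball (a ^+ k) <= 1.
  by rewrite normal_ball_le1 le_normal_ball // exprn_ege1 // ltW.
apply: le_trans (prod_exprn_ge_expR n normal_ball1_gt0 p_bd N_le).
rewrite ler_expR mulNr lerN2 mulrAC ler_pM2r ?invr_gt0 ?normal_ball1_gt0 //.
under eq_bigr do rewrite mulrAC.
rewrite -mulr_suml; apply: ler_wpM2r => //.
apply: (sum_geometric_le (e := fun k => 1 - normal_ball (a ^+ k))
  (lt_trans ltr01 C_gt1) (normal_tail_pow_const_ge0 m) Cm) => k.
apply: le_trans (normal_ball_tail_pow (a ^+ k) m _) _.
  by rewrite exprn_gt0 // (lt_trans ltr01 a_gt1).
by rewrite -!exprM mulnCA (mulnC k).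
Qed.

End normal_ball.

Lemma scaled_abs_le_itv {R : realType} (eps r : R) (k : nat) : 0 < eps ->
  [set x : R | 2 ^- k * eps * `|x| <= r ^+ k * eps]
    = `[-((2 * r) ^+ k), (2 * r) ^+ k]%classic.
Proof.
move=> eps0.
have abs_le x : (2 ^- k * eps * `|x| <= r ^+ k * eps) = (`|x| <= (2 * r) ^+ k).
  rewrite mulrAC ler_pM2r // mulrC ler_pdivrMr ?exprn_gt0 //.
  by rewrite exprMn mulrC.
by apply/seteqP; split=> x /=; rewrite in_itv /= -ler_norml abs_le.
Qed.

Theorem lemma3 (R : realType) (C2 r : R) :
  1 < C2 -> 2^-1 < r -> r < 1 ->
  exists C3 : R,
  forall (d : measure_display) (Omega : measurableType d)
         (P : probability Omega R) (T : Type) (X : T -> Omega -> R)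
         (Psi : R -> R) (eps0 : R),
    centered_gaussian_process P X ->
    separable_process P X ->
    totally_bounded_pm (gauss_rho P X) ->
    (forall e : R, 0 < e -> (covering_number (gauss_rho P X) e)%:R <= Psi e) ->
    0 < eps0 ->
    (forall e : R, 0 < e -> e <= eps0 -> Psi (e / 2) <= C2 * Psi e) ->
    forall eps : R, 0 < eps -> eps < eps0 ->
      expR (- (C3 * Psi eps)) <=
      limn (fun n : nat => \prod_(k < n)
        fine (normal_prob 0 1
                [set x : R | 2 ^- k * eps * `|x| <= r ^+ k * eps])
          ^+ covering_number (gauss_rho P X) (eps / 2 ^+ k.+1)).
Proof.
move=> C2_gt1 r_gt r_lt1; pose a := 2 * r.
have a_gt1 : 1 < a by rewrite /a; lra.
have [m Bm] : exists m, 2 * C2 <= (a ^+ 2) ^+ m.+1.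
  by apply: exists_expr_ge; rewrite expr_gt1 // ltW // (lt_trans ltr01).
exists (2 * C2 * normal_tail_pow_const m / normal_ball 1).
move=> d Omega P T X Psi eps0 _ _ _ N_le_Psi _ Psi_doubling eps eps_gt0 eps_lt.
have Psi_ge0 : 0 <= Psi eps by apply: le_trans (N_le_Psi _ eps_gt0); rewrite ler0n.
pose N k := covering_number (gauss_rho P X) (eps / 2 ^+ k.+1).
have N_le k : (N k)%:R <= C2 ^+ k.+1 * Psi eps.
  have C2_ge0 : 0 <= C2 by lra.
  apply: le_trans (N_le_Psi _ _)
    (doubling_iter Psi C2_ge0 eps_gt0 (ltW eps_lt) Psi_doubling k.+1).
  by rewrite divr_gt0 ?exprn_gt0.
under eq_fun do under eq_bigr do rewrite scaled_abs_le_itv // -/(normal_ball _).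
apply: nonincreasing_limn_ge => [|n].
  apply: (nonincreasing_prod_exprn (fun k => normal_ball (a ^+ k)) N) => k.
  by rewrite normal_ball_ge0 normal_ball_le1.
exact: (prod_normal_ball_ge n a_gt1 C2_gt1 Bm Psi_ge0 N_le).
Qed.
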